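(* Let $G$ be a strongly connected digraph with at least one arc (loops and multiple arcs allowed). Then $D(LG)=D(G)$ if and only if $G$ is a directed cycle.
   Context: Digraphs are finite and may have loops and multiple arcs. For vertices $u,v$, $\mathrm{dist}_G(u,v)$ is the length of a shortest directed walk from $u$ to $v$ (so $\mathrm{dist}_G(u,u)=0$). $G$ is strongly connected if $\mathrm{dist}_G(u,v)<\infty$ for all $u,v$, and its diameter is $D(G)=\max_{u,v}\mathrm{dist}_G(u,v)$. The line digraph $LG$ has as vertex set the set of arcs of $G$, with an arc from $e$ to $f$ whenever the head (final vertex) of $e$ equals the tail (initial vertex) of $f$. A directed cycle is a digraph with vertices $v_0,\dots,v_{n-1}$ ($n\ge1$) and exactly the arcs $(v_i,v_{i+1 \bmod n})$. *)

From mathcomp Require Import all_boot.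
Set Implicit Arguments. Unset Strict Implicit. Unset Printing Implicit Defensive.

Record digraph := Digraph {
  dvert : finType;
  darc : finType;
  tail : darc -> dvert;
  head : darc -> dvert }.

Fixpoint walk (G : digraph) (k : nat) (u v : dvert G) : Prop :=
  match k with
  | 0 => u = v
  | k'.+1 => exists a : darc G, tail a = u /\ @walk G k' (head a) v
  end.
Arguments walk : clear implicits.

Definition is_dist (G : digraph) (u v : dvert G) (d : nat) : Prop :=
  walk G d u v /\ forall k, walk G k u v -> d <= k.

Definition strongly_connected (G : digraph) : Prop :=
  forall u v : dvert G, exists k, walk G k u v.

Definition is_diam (G : digraph) (D : nat) : Prop :=
  (forall u v : dvert G, exists d, is_dist u v d /\ d <= D) /\
  (exists u v : dvert G, is_dist u v D).

Definition line_arc (G : digraph) : finType :=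
  {p : darc G * darc G | head p.1 == tail p.2}.

Definition line_digraph (G : digraph) : digraph :=
  @Digraph (darc G) (line_arc G)
    (fun p : line_arc G => (val p).1) (fun p : line_arc G => (val p).2).

(* G is (isomorphic to) a directed cycle on n+1 >= 1 vertices
   v_0,...,v_n with exactly the arcs (v_i, v_{i+1 mod n+1}). *)
Definition is_dicycle (G : digraph) : Prop :=
  exists n (f : 'I_n.+1 -> dvert G) (g : 'I_n.+1 -> darc G),
    bijective f /\ bijective g /\
    forall i, tail (g i) = f i /\ head (g i) = f (ordS i).

(* A walk of length k+1 in LG from e to f projects to a walk of length k in G
   from head e to tail f, so dist_LG(e, f) >= dist_G(head e, tail f) + 1 when
   e <> f.  Hence if D(LG) = D(G) = D and dist_G(u, v) = D, every arc into u
   coincides with every arc out of v.  The set of vertices v attaining the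
   diameter as a target is therefore closed under taking out-neighbours, so by
   strong connectivity it is everything, and every vertex has out-degree one.
   A strongly connected digraph in which tail is injective is the orbit of the
   successor map, i.e. a directed cycle.  Conversely a directed cycle on n+1
   vertices and its line digraph (again such a cycle) both have diameter n. *)
From Pilot Require Import Defs.
From mathcomp Require Import all_boot zify.
Set Implicit Arguments. Unset Strict Implicit. Unset Printing Implicit Defensive.
Local Notation head := Defs.head.
Local Notation tail := Defs.tail.

Lemma walk_rcons (G : digraph) k (x : dvert G) (a : darc G) :
  walk G k x (tail a) -> walk G k.+1 x (head a).
Proof.
elim: k x => [|k IH] x /=; first by move->; exists a.
by move=> [b [<- Hb]]; exists b; split=> //; apply: IH.
Qed.

Lemma walk_last (G : digraph) k (x y : dvert G) :
  walk G k.+1 x y -> exists a, walk G k x (tail a) /\ head a = y.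
Proof.
elim: k x => [|k IH] x /=; first by move=> [a [<- <-]]; exists a.
move=> [a [<- /IH [b [Hb <-]]]].
by exists b; split=> //; exists a.
Qed.

Lemma walk_line_digraph (G : digraph) k (e f : darc G) :
  walk (line_digraph G) k.+1 e f -> walk G k (head e) (tail f).
Proof.
elim: k e => [|k IH] e /= [p [<- Hp]].
  by rewrite -Hp; apply/eqP; exact: (valP p).
exists (val p).2; split; first by apply/esym/eqP; exact: (valP p).
exact: IH.
Qed.

Section StronglyConnected.

Variables (G : digraph) (a0 : darc G).
Hypothesis G_sc : strongly_connected G.

Lemma exists_in_arc (u : dvert G) : exists e : darc G, head e = u.
Proof.
have [[|k] Hk] := G_sc (head a0) u; first by exists a0.
by have [a [_ Ha]] := walk_last Hk; exists a.
Qed.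

Lemma exists_out_arc (v : dvert G) : exists e : darc G, tail e = v.
Proof.
have [[|k] Hk] := G_sc v (tail a0); first by exists a0.
by case: Hk => a [Ha _]; exists a.
Qed.

End StronglyConnected.

Section LineDiameterBound.

Variables (G : digraph) (D : nat).
Hypothesis G_sc : strongly_connected G.
Hypothesis line_dist_le :
  forall e f : darc G, exists d, @is_dist (line_digraph G) e f d /\ d <= D.

Lemma diametral_arcs_eq (u v : dvert G) (e f : darc G) :
  is_dist u v D -> head e = u -> tail f = v -> e = f.
Proof.
move=> [_ Dmin] He Hf; case: (eqVneq e f) => // e_neq_f.
have [[|d] [[Hw _] d_le]] := line_dist_le e f.
  by move: e_neq_f; rewrite Hw eqxx.
have := walk_line_digraph Hw; rewrite He Hf => /Dmin/leq_ltn_trans/(_ d_le).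
by rewrite ltnn.
Qed.

Definition diametral_target (v : dvert G) := exists u, is_dist u v D.

Lemma diametral_target_head (c : darc G) :
  diametral_target (tail c) -> diametral_target (head c).
Proof.
move=> [u Huv].
have [e He] := exists_in_arc c G_sc u.
have into_u b : head b = u -> b = c by move=> Hb; exact: diametral_arcs_eq Huv Hb _.
have head_c : head c = u by rewrite -(into_u e He).
rewrite head_c /diametral_target; case: Huv => Hw Dmin.
case: D Hw Dmin => [|D'] Hw Dmin.
  by exists u; split=> // k _.
case: Hw => a [Ha Hw]; exists (head a); split.
  by rewrite -head_c; apply: walk_rcons.
(* a walk from head a to u must end with c, so prepending a gives a walk from u to
   tail c *)
move=> [|k] Hk.
  by move: Hk => /= Hk; rewrite Hk in Hw; have := Dmin _ Hw; rewrite ltnn.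
have [b [Hb /into_u b_c]] := walk_last Hk.
by rewrite b_c in Hb; apply: Dmin; exists a.
Qed.

Lemma diametral_target_walk k (v x : dvert G) :
  diametral_target v -> walk G k v x -> diametral_target x.
Proof.
elim: k v => [|k IH] v /=; first by move=> ? <-.
by move=> Hv [a [Ha Hw]]; apply: IH Hw; apply: diametral_target_head; rewrite Ha.
Qed.

Lemma tail_inj_of_diametral (u v : dvert G) :
  is_dist u v D -> injective (@tail G).
Proof.
move=> Huv a b Hab.
have [k Hk] := G_sc v (tail a).
have [w Hw] := diametral_target_walk (ex_intro _ u Huv) Hk.
have [e He] := exists_in_arc a G_sc w.
by rewrite -(diametral_arcs_eq Hw He erefl) (diametral_arcs_eq Hw He (esym Hab)).
Qed.

End LineDiameterBound.

Section FunctionalDigraph.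

Variables (G : digraph) (a0 : darc G).
Hypothesis G_sc : strongly_connected G.
Hypothesis tail_inj : injective (@tail G).

Definition out_arc (x : dvert G) := odflt a0 [pick a | tail a == x].

Lemma out_arcK x : tail (out_arc x) = x.
Proof.
rewrite /out_arc; case: pickP => [a /eqP //|no_arc].
by have [f Hf] := exists_out_arc a0 G_sc x; move: (no_arc f); rewrite Hf eqxx.
Qed.

Lemma tailK : cancel (@tail G) out_arc.
Proof. by move=> a; apply: tail_inj; rewrite out_arcK. Qed.

Definition succ (x : dvert G) := head (out_arc x).

Lemma walk_iter_succ k (x y : dvert G) : walk G k x y -> y = iter k succ x.
Proof.
elim: k x => [|k IH] x /=; first by move->.
by move=> [a [<- Hw]]; rewrite (IH _ Hw) -iterS iterSr /succ tailK.
Qed.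

Lemma fconnect_succ (x y : dvert G) : fconnect succ x y.
Proof. by have [k /walk_iter_succ ->] := G_sc x y; apply: fconnect_iter. Qed.

Lemma functional_dicycle : is_dicycle G.
Proof.
pose x0 := tail a0; pose n := (order succ x0).-1.
have Sn : n.+1 = order succ x0 by rewrite orderSpred.
pose f (i : 'I_n.+1) := iter i succ x0.
pose h (y : dvert G) : 'I_n.+1 := inord (findex succ x0 y).
have fK : cancel f h.
  by move=> i; apply: val_inj; rewrite /h /f /= findex_iter ?inordK // -Sn.
have hK : cancel h f.
  move=> y; rewrite /h /f inordK ?iter_findex ?fconnect_succ // Sn.
  exact/findex_max/fconnect_succ.
exists n, f, (out_arc \o f); split; first by exists h.
split; first by exists (h \o @tail G) => [i|a] /=; rewrite ?out_arcK ?fK ?hK ?tailK.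
move=> i; split; first exact: out_arcK.
rewrite -/(succ (f i)) /f /=.
have [i_lt|i_ge] := ltnP i.+1 n.+1; first by rewrite modn_small.
have -> : (i : nat) = n by apply/eqP; rewrite eqn_leq -ltnS ltn_ord.
by rewrite modnn /= -iterS Sn; apply/(orbitPcycle 2 4); apply: fconnect_succ.
Qed.

End FunctionalDigraph.

Definition dicycle_on (G : digraph) n (f : 'I_n.+1 -> dvert G)
    (g : 'I_n.+1 -> darc G) :=
  bijective f /\ bijective g /\
  forall i, tail (g i) = f i /\ head (g i) = f (ordS i).

Lemma val_iter_ordS n (i : 'I_n.+1) k : val (iter k (@ordS _) i) = (i + k) %% n.+1.
Proof.
elim: k => [|k IH]; first by rewrite addn0 modn_small.
by rewrite iterS /= IH addnS -addn1 modnDml addn1.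
Qed.

Section DirectedCycle.

Variables (G : digraph) (n : nat) (f : 'I_n.+1 -> dvert G) (g : 'I_n.+1 -> darc G).
Hypothesis fg_cycle : dicycle_on f g.

Lemma dicycle_walkE k i v : walk G k (f i) v <-> v = f (iter k (@ordS _) i).
Proof.
case: fg_cycle => [[fi fK _] [[gi _ giK] fg]].
elim: k i v => [|k IH] i v /=; first by split=> ->.
split.
- move=> [a [Ha Hw]].
  have a_gi : a = g i.
    by rewrite -(giK a); congr g; apply: (can_inj fK); rewrite -(proj1 (fg _)) giK.
  by rewrite a_gi (proj2 (fg i)) in Hw; rewrite (proj1 (IH _ _) Hw) -iterSr iterS.
- move->; exists (g i); have [-> ->] := fg i; split=> //.
  by apply/IH; rewrite -iterS iterSr.
Qed.

Lemma dicycle_dist i j : is_dist (f i) (f j) ((j + n.+1 - i) %% n.+1).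
Proof.
have [[fi fK _] _] := fg_cycle.
have walk_mod k : walk G k (f i) (f j) <-> (i + k) %% n.+1 = j.
  rewrite dicycle_walkE -val_iter_ordS.
  by split=> [/(can_inj fK) ->|Hk] //; congr f; apply: val_inj.
have i_cancel : i + (j + n.+1 - i) = j + n.+1.
  by have := ltn_ord i; have := ltn_ord j; lia.
split; first by apply/walk_mod; rewrite modnDmr i_cancel modnDr modn_small.
move=> k /walk_mod Hk.
suff -> : (j + n.+1 - i) %% n.+1 = k %% n.+1 by apply: leq_mod.
by apply/eqP; rewrite -(eqn_modDl i) i_cancel modnDr -Hk modn_mod.
Qed.

Lemma dicycle_diam : is_diam G n.
Proof.
have [[fi _ fiK] _] := fg_cycle.
split.
  move=> u v; rewrite -(fiK u) -(fiK v).
  by eexists; split; [apply: dicycle_dist | rewrite -ltnS ltn_pmod].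
exists (f ord0), (f ord_max).
by have := dicycle_dist ord0 ord_max; rewrite /= subn0 modnDr modn_small.
Qed.

Lemma dicycle_line_arc_proof i : head (g i) == tail (g (ordS i)).
Proof.
by case: fg_cycle => _ [_ fg]; have [_ ->] := fg i; have [-> _] := fg (ordS i).
Qed.

Definition dicycle_line_arc i : line_arc G :=
  exist _ (g i, g (ordS i)) (dicycle_line_arc_proof i).

Lemma dicycle_on_line_digraph : @dicycle_on (line_digraph G) n g dicycle_line_arc.
Proof.
have [[fi fK _] [[gi gK giK] fg]] := fg_cycle.
split; [by exists gi | split=> //].
exists (fun p : line_arc G => gi (val p).1) => [i|p]; first by rewrite /= gK.
apply: val_inj; case: p => [[a b] /= /eqP Hab]; rewrite giK; congr (_, _).
rewrite -(giK b) in Hab *; congr g.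
have [_ Hh] := fg (gi a); have [Ht _] := fg (gi b).
by apply: (can_inj fK); rewrite -Ht -Hh -Hab giK.
Qed.

End DirectedCycle.

Theorem proposition2p1 (G : digraph) :
  strongly_connected G -> 0 < #|darc G| ->
  ((exists D, is_diam G D /\ is_diam (line_digraph G) D) <-> is_dicycle G).
Proof.
move=> G_sc /card_gt0P [a0 _]; split.
  move=> [D [[_ [u [v Huv]]] [line_dist_le _]]].
  exact/(functional_dicycle a0 G_sc)/(tail_inj_of_diametral G_sc line_dist_le Huv).
move=> [n [f [g cyc]]]; exists n; split; first exact: dicycle_diam cyc.
exact: dicycle_diam (dicycle_on_line_digraph cyc).
Qed.
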